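(* Let $T_1,T_2,T_3$ be binary trees on $[n]$. For the JC model and for the K2P model: if there is a four-element set $Q\subseteq[n]$ such that $T_3|_Q\notin\{T_1|_Q,T_2|_Q\}$, then $V_{T_3}\not\subseteq V_{T_1}\ast V_{T_2}$.
   Context: Trees are unrooted binary trees with leaves labelled bijectively by $[n]$; $T|_Q$ is the induced subtree on leaf set $Q$; $\Sigma(T)$ is the set of splits of $T$. With $G=\mathbb{Z}_2\times\mathbb{Z}_2$ and $A=(0,0)$, $C=(0,1)$, $G=(1,0)$, $T=(1,1)$, the K3P model on $T$ in Fourier coordinates $q_{g_1\cdots g_n}$ is $q_{g_1\cdots g_n}=\prod_{A|B\in\Sigma(T)}a^{A|B}_{\sum_{i\in A}g_i}$ if $\sum g_i=0$ and $0$ otherwise; K2P imposes $a^e_G=a^e_T$, JC imposes $a^e_C=a^e_G=a^e_T$ for all splits $e$. $V_T\subseteq\mathbb{P}^{4^n-1}$ is the Zariski closure of the image for complex parameters; $V\ast W$ is the join (Zariski closure of the union of all lines meeting $V$ and $W$). *)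

From mathcomp Require Import all_boot all_algebra.
From mathcomp Require Import Rstruct.
From mathcomp Require Import complex.
From mathcomp Require Import mpoly.

Set Implicit Arguments.
Unset Strict Implicit.
Unset Printing Implicit Defensive.

Import GRing.Theory.
Local Open Scope ring_scope.

Definition CC : numClosedFieldType := (Rdefinitions.R)[i].

Definition grp : zmodType := ('Z_2 * 'Z_2)%type.
Definition gA : grp := (0%R, 0%R).
Definition gC : grp := (0%R, 1%R).
Definition gG : grp := (1%R, 0%R).
Definition gT : grp := (1%R, 1%R).

(* A split A|B of [n] = 'I_n is encoded as the unordered pair {A, B}.  *)
Definition is_split (n : nat) (e : {set {set 'I_n}}) : Prop :=
  exists A : {set 'I_n}, [/\ A != set0, ~: A != set0 & e = [set A; ~: A]].

Definition compatible (n : nat) (e1 e2 : {set {set 'I_n}}) : bool :=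
  [exists A1 in e1, exists A2 in e2, A1 :&: A2 == set0].

(* Unrooted binary (phylogenetic) trees with leaves bijectively labelled by
   [n], identified with their split systems: by Buneman's theorem these are
   exactly the pairwise compatible split systems with 2n-3 splits. *)
Definition binary_tree (n : nat) (T : {set {set {set 'I_n}}}) : Prop :=
  [/\ (forall e, e \in T -> is_split e),
      {in T &, forall e1 e2, compatible e1 e2}
    & #|T| = (2 * n - 3)%N].

Definition sides (n : nat) (T : {set {set {set 'I_n}}}) : {set {set 'I_n}} :=
  \bigcup_(e in T) e.

(* The induced subtree T|_Q, as its split system on Q: the restrictions
   (A cap Q) | (Q \ A) of the splits of T that stay nontrivial on Q. *)
Definition tree_restrict (n : nat) (T : {set {set {set 'I_n}}}) (Q : {set 'I_n})
  : {set {set {set 'I_n}}} :=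
  [set [set A :&: Q; Q :\: A] | A in sides T
                              & (A :&: Q != set0) && (Q :\: A != set0)].

Definition labelling (n : nat) := {ffun 'I_n -> grp}.

Definition ncoord (n : nat) : nat := #|{: labelling n}|.

(* A vector of C^(4^n), coordinates q_{g_1...g_n}; coordinate of g is
   q (enum_rank g). *)
Definition vec (n : nat) := 'I_(ncoord n) -> CC.
Definition coord (n : nat) (q : vec n) (g : labelling n) : CC := q (enum_rank g).

Definition nonzero (n : nat) (q : vec n) : Prop := exists i, q i != 0.

Definition side (n : nat) (e : {set {set 'I_n}}) : {set 'I_n} :=
  odflt set0 [pick A in e].

(* sum_{i in A} g_i for the split e = A|B (well defined when sum g_i = 0) *)
Definition split_elt (n : nat) (e : {set {set 'I_n}}) (g : labelling n) : grp :=
  \sum_(i in side e) g i.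

Definition params (n : nat) := {set {set 'I_n}} -> grp -> CC.

Definition fourier_param (n : nat) (T : {set {set {set 'I_n}}}) (a : params n)
  (g : labelling n) : CC :=
  if \sum_i g i == 0 then \prod_(e in T) a e (split_elt e g) else 0.

Inductive model := JC | K2P.

Definition model_constraint (m : model) (n : nat) (a : params n) : Prop :=
  match m with
  | K2P => forall e, a e gG = a e gT
  | JC => forall e, a e gC = a e gG /\ a e gG = a e gT
  end.

(* Image of the parametrisation (nonzero points, seen projectively). *)
Definition model_image (m : model) (n : nat) (T : {set {set {set 'I_n}}})
  : vec n -> Prop :=
  fun q => nonzero q /\ exists a : params n,
      model_constraint m a /\ forall g, coord q g = fourier_param T a g.

(* Projective geometry in P^(4^n - 1): a subset of projective space is *)
(* represented by the set of nonzero vectors of C^(4^n) lying over it. *)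

Definition zariski_closure (n : nat) (S : vec n -> Prop) : vec n -> Prop :=
  fun z => nonzero z /\
    forall (d : nat) (p : {mpoly CC[ncoord n]}), p \is d.-homog ->
      (forall s, S s -> p.@[s] = 0) -> p.@[z] = 0.

Definition model_variety (m : model) (n : nat) (T : {set {set {set 'I_n}}})
  : vec n -> Prop := zariski_closure (model_image m T).

Definition join (n : nat) (V W : vec n -> Prop) : vec n -> Prop :=
  zariski_closure (fun z => nonzero z /\
    exists (x y : vec n) (alpha beta : CC),
      [/\ V x, W y & forall i, z i = alpha * x i + beta * y i]).

(* Deleting a leaf x from a compatible split system loses at most two splits:
   the split {x}|rest, and one split of the (by compatibility, unique) pair of
   splits that differ only in the side of x and hence merge.  So the 2n-3 splits of a binary tree leave at least five splits
   on a four-set Q, which forces T|_Q to consist of the four trivial splits and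
   one split W|Q\W with |W| = 2.
   Consider the coordinates q_S at the labellings with T on S, G on Q\S and A
   off Q, for S empty or a pair.  Since a_G = a_T under JC and K2P, on the
   parametrisation of a tree with quartet W|Q\W the coordinate q_S takes one
   value alpha when S is empty or a side of W|Q\W and another value beta for
   the four other pairs.  Hence the linear form sum_S (+-1)(q_S - q_0), with
   sign + exactly on the two sides of the quartet of T3, vanishes on V_T when
   T|_Q differs from T3|_Q, so on V_T1 * V_T2, but equals 4 (alpha - beta) on
   the parametrisation of T3, which is nonzero for suitable parameters. *)

From Pilot Require Import Defs.
From mathcomp Require Import all_boot all_algebra.
From mathcomp Require Import Rstruct.
From mathcomp Require Import complex.
From mathcomp Require Import mpoly.
From mathcomp Require Import zify ring.

Set Implicit Arguments.
Unset Strict Implicit.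
Unset Printing Implicit Defensive.

Import GRing.Theory Num.Theory.

Section FinsetFacts.
Variable T : finType.
Implicit Types (a b c d : T) (Q A : {set T}).

Lemma set2_inj a b c d :
  [set a; b] = [set c; d] -> (a = c /\ b = d) \/ (a = d /\ b = c).
Proof.
move=> H.
have : a \in [set c; d] by rewrite -H set21.
have : b \in [set c; d] by rewrite -H set22.
have : c \in [set a; b] by rewrite H set21.
have : d \in [set a; b] by rewrite H set22.
rewrite !inE.
by do 4 case/orP => /eqP ?; subst; auto.
Qed.

Lemma setDDid Q A : A \subset Q -> Q :\: (Q :\: A) = A.
Proof. by move=> sAQ; rewrite setDDr setDv set0U (setIidPr sAQ). Qed.

Lemma setIDv Q A : A :&: (Q :\: A) = set0.
Proof. by rewrite setIDA setDIl setDv set0I. Qed.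

End FinsetFacts.

Lemma card_le_imset_add1 (aT rT : finType) (f : aT -> rT) (D : {set aT}) :
  (forall u v u' v', u \in D -> v \in D -> u' \in D -> v' \in D ->
     u != v -> f u = f v -> u' != v' -> f u' = f v' -> u' = u \/ u' = v) ->
  #|D| <= #|f @: D| + 1.
Proof.
move=> K.
case: (boolP [exists u in D, exists v in D, (u != v) && (f u == f v)]).
- case/exists_inP=> u uD /exists_inP [v vD /andP [nuv /eqP fuv]].
  rewrite (cardsD1 u D) uD add1n addnC ltnS.
  rewrite -(card_in_imset (f := f) (D := mem (D :\ u))).
    by apply/subset_leq_card/imsetS/subsetDl.
  move=> u' v'; rewrite !inE => /andP [nu' u'D] /andP [nv' v'D] fe.
  apply/eqP; apply: contraT => nuv'.
  have [h1|h1] := K u v u' v' uD vD u'D v'D nuv fuv nuv' fe.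
    by rewrite h1 eqxx in nu'.
  have nvu' : v' != u' by rewrite eq_sym.
  have [h2|h2] := K u v v' u' uD vD v'D u'D nuv fuv nvu' (esym fe).
  + by rewrite h2 eqxx in nv'.
  + by rewrite h1 h2 eqxx in nuv'.
- move/exists_inPn=> H; rewrite card_in_imset ?leq_addr // => u v uD vD fe.
  apply/eqP; apply: contraT => nuv.
  by move: (H u uD) => /exists_inPn /(_ v vD); rewrite nuv fe eqxx.
Qed.

Section SplitSystems.
Variable I : finType.
Implicit Types (Q S W X Y Z A B C : {set I}) (e u v : {set {set I}}) (F : {set {set {set I}}}).

Definition split_of X e :=
  exists A, [/\ A \subset X, A != set0, X :\: A != set0 & e = [set A; X :\: A]].

Definition splits_compatible e1 e2 : bool :=
  [exists A1 in e1, exists A2 in e2, A1 :&: A2 == set0].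

Definition split_system X F :=
  (forall e, e \in F -> split_of X e) /\ {in F &, forall e1 e2, splits_compatible e1 e2}.

Definition restrict_split Y e : {set {set I}} := [set B :&: Y | B in e].

Definition restrict_splits Y F : {set {set {set I}}} :=
  [set restrict_split Y e | e in F & set0 \notin restrict_split Y e].

Lemma restrict_split2 Y A B : restrict_split Y [set A; B] = [set A :&: Y; B :&: Y].
Proof. by rewrite /restrict_split imsetU1 imset_set1. Qed.

Lemma split_of_restrict X Y e : Y \subset X -> split_of X e ->
  set0 \notin restrict_split Y e -> split_of Y (restrict_split Y e).
Proof.
move=> sYX [A [sAX _ _ ->]]; rewrite restrict_split2 !inE negb_or => /andP [nA nB].
have eB : (X :\: A) :&: Y = Y :\: A by rewrite setIDAC (setIidPr sYX).
exists (A :&: Y); split; first exact: subsetIr.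
- by rewrite eq_sym.
- by rewrite setDIr setDv setU0 -eB eq_sym.
- by rewrite eB setDIr setDv setU0.
Qed.

Lemma splits_compatible_restrict Y e1 e2 : splits_compatible e1 e2 ->
  splits_compatible (restrict_split Y e1) (restrict_split Y e2).
Proof.
case/exists_inP=> A1 HA1 /exists_inP [A2 HA2 /eqP H].
apply/exists_inP; exists (A1 :&: Y); first exact: imset_f.
apply/exists_inP; exists (A2 :&: Y); first exact: imset_f.
by rewrite setIACA H set0I.
Qed.

Lemma split_system_restrict X Y F : Y \subset X -> split_system X F ->
  split_system Y (restrict_splits Y F).
Proof.
move=> sYX [Hs Hc]; split.
- move=> f /imsetP [e]; rewrite inE => /andP [eF e0] ->.
  exact: split_of_restrict sYX (Hs _ eF) e0.
- move=> f1 f2 /imsetP [e1]; rewrite inE => /andP [e1F _] -> /imsetP [e2].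
  by rewrite inE => /andP [e2F _] ->; apply/splits_compatible_restrict/Hc.
Qed.

Lemma restrict_split_comp Y Z e : Y \subset Z ->
  restrict_split Y (restrict_split Z e) = restrict_split Y e.
Proof.
move=> sYZ; rewrite /restrict_split -imset_comp; apply: eq_imset => B /=.
by rewrite -setIA (setIidPr sYZ).
Qed.

Lemma restrict_splits_comp Y Z F : Y \subset Z ->
  restrict_splits Y (restrict_splits Z F) = restrict_splits Y F.
Proof.
move=> sYZ; apply/setP=> e; apply/imsetP/imsetP.
- case=> e1; rewrite inE => /andP [/imsetP [e2]]; rewrite inE => /andP [e2F _] -> H ->.
  exists e2; last by rewrite restrict_split_comp.
  by rewrite inE e2F -(restrict_split_comp e2 sYZ).
- case=> e1; rewrite inE => /andP [e1F H] ->.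
  exists (restrict_split Z e1); last by rewrite restrict_split_comp.
  rewrite inE restrict_split_comp // H andbT; apply/imsetP; exists e1 => //.
  rewrite inE e1F /=; apply: contra H => /imsetP [B HB HB0].
  apply/imsetP; exists B => //; apply/eqP; rewrite eq_sym -subset0.
  by rewrite HB0 setIS.
Qed.

Lemma restrict_splits_id X F : split_system X F -> restrict_splits X F = F.
Proof.
move=> [Hs _].
have hr e : e \in F -> restrict_split X e = e /\ set0 \notin restrict_split X e.
  move=> eF; have [A [sAX A0 XA0 ->]] := Hs e eF.
  rewrite restrict_split2 (setIidPl sAX) (setIidPl (subsetDl X A)); split => //.
  by rewrite !inE negb_or eq_sym A0 eq_sym XA0.
apply/setP=> e; apply/imsetP/idP.
- by case=> e0; rewrite inE => /andP [e0F _] ->; have [-> _] := hr _ e0F.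
- move=> eF; exists e; last by have [-> _] := hr _ eF.
  by rewrite inE eF; have [_ ->] := hr _ eF.
Qed.


Lemma split_of_pointed X x e : x \in X -> split_of X e ->
  exists A, [/\ x \in A, A \subset X & e = [set A; X :\: A]].
Proof.
move=> xX [A [sAX _ _ ->]].
case: (boolP (x \in A)) => xA; first by exists A.
exists (X :\: A); split; first by rewrite inE xA.
- exact: subsetDl.
- by rewrite setDDid // setUC.
Qed.

Lemma restrict_split_delete X x A : x \in A -> A \subset X ->
  restrict_split (X :\ x) [set A; X :\: A] = [set A :\ x; X :\: A].
Proof.
move=> xA sAX; rewrite restrict_split2; congr [set _; _]; apply/setP=> i; rewrite !inE.
- by case: (i == x) (i \in A) (i \in X) (subsetP sAX i) => [] [] [] // ->.
- case: (boolP (i == x)) => [/eqP ->|] /=; first by rewrite xA.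
  by case: (i \in X); rewrite ?andbF ?andbT.
Qed.

Lemma restrict_delete_collision X x u v : x \in X -> split_of X u -> split_of X v ->
  u != v -> restrict_split (X :\ x) u = restrict_split (X :\ x) v ->
  set0 \notin restrict_split (X :\ x) u ->
  exists B C, [/\ x \notin B, x \notin C, B != set0, C != set0 &
    [/\ B :&: C = set0, B :|: C = X :\ x, u = [set x |: B; C] & v = [set x |: C; B]]].
Proof.
move=> xX su sv nuv.
have [A [xA sAX eu]] := split_of_pointed xX su.
have [A' [xA' sA'X ev]] := split_of_pointed xX sv; subst u v.
rewrite !restrict_split_delete // => /set2_inj [[h1 _]|[h1 h2]] H0.
  suff eA : A = A' by rewrite eA eqxx in nuv.
  apply/setP=> i; move/setP: h1 => /(_ i); rewrite !inE.
  by case: (boolP (i == x)) => [/eqP ->|] //=; rewrite xA xA'.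
exists (A :\ x), (X :\: A); split; first by rewrite setD11.
- by rewrite inE xA.
- by apply: contra H0 => /eqP <-; rewrite set21.
- by apply: contra H0 => /eqP <-; rewrite set22.
split.
- by apply/setP=> i; rewrite !inE; case: (i \in A); rewrite ?andbF.
- apply/setP=> i; rewrite !inE.
  case: (boolP (i == x)) => [/eqP ->|_] /=; first by rewrite xA.
  by case: (i \in A) (i \in X) (subsetP sAX i) => [] [] // ->.
- by congr [set _; _]; apply/setP=> i; rewrite !inE; case: eqP => [->|].
- rewrite h2 h1; congr [set _; _]; apply/setP=> i; rewrite !inE.
  by case: eqP => [->|].
Qed.

Lemma splits_compatible_pointed x B C B' C' : x \notin C -> x \notin C' ->
  splits_compatible [set x |: B; C] [set x |: B'; C'] ->
  [|| B :&: C' == set0, C :&: B' == set0 | C :&: C' == set0].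
Proof.
move=> xC xC' /exists_inP [A1 + /exists_inP [A2 + /eqP H]].
rewrite !inE => /orP [] /eqP E1 /orP [] /eqP E2; subst A1 A2.
- by move/setP: H => /(_ x); rewrite !inE eqxx.
- apply/orP; left; apply/eqP/setP=> i; move/setP: H => /(_ i); rewrite !inE.
  by case: (i \in B) (i \in C') => [] [] //; rewrite orbT.
- apply/orP; right; apply/orP; left; apply/eqP/setP=> i; move/setP: H => /(_ i).
  by rewrite !inE; case: (i \in B') (i \in C) => [] [] //; rewrite orbT.
- by rewrite H eqxx !orbT.
Qed.

Local Ltac by_membership i B C B' C' :=
  repeat match goal with H : _ =i _ |- _ => move: (H i); clear H end;
  rewrite ?inE; case: (i \in B); case: (i \in C); case: (i \in B'); case: (i \in C').

Lemma bipartition_eq B C B' C' :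
  B :|: C = B' :|: C' -> B :&: C = set0 -> B' :&: C' = set0 ->
  B != set0 -> C != set0 -> B' != set0 -> C' != set0 ->
  1 < (B :&: B' == set0) + (B :&: C' == set0) + (C :&: B' == set0) + (C :&: C' == set0) ->
  (B = B' /\ C = C') \/ (B = C' /\ C = B').
Proof.
move=> /setP U /setP D /setP D' /set0Pn [b Hb] /set0Pn [c Hc] /set0Pn [b' Hb'] /set0Pn [c' Hc'].
case E1: (B :&: B' == set0); case E2: (B :&: C' == set0);
case E3: (C :&: B' == set0); case E4: (C :&: C' == set0) => //= _;
repeat match goal with E : (_ == set0) = true |- _ => move/eqP/setP in E end;
repeat match goal with E : (_ == set0) = false |- _ => clear E end.
all: first
  [ by left; split; apply/setP => i; by_membership i B C B' C'
  | by right; split; apply/setP => i; by_membership i B C B' C'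
  | by exfalso; move: Hb; by_membership b B C B' C'
  | by exfalso; move: Hc; by_membership c B C B' C'
  | by exfalso; move: Hb'; by_membership b' B C B' C'
  | by exfalso; move: Hc'; by_membership c' B C B' C' ].
Qed.

Lemma split_of_degenerate X x e : split_of X e ->
  set0 \in restrict_split (X :\ x) e -> e = [set [set x]; X :\ x].
Proof.
have single A : A \subset X -> A != set0 -> set0 = A :&: (X :\ x) -> A = [set x].
  move=> sAX /set0Pn [a aA] /setP H; apply/setP=> i; rewrite inE.
  apply/idP/eqP => [iA|->]; first by move: (H i); rewrite !inE iA (subsetP sAX i iA) andbT; case: eqP.
  by move: (H a); rewrite !inE aA (subsetP sAX a aA) andbT; case: eqP => [<-|].
move=> [A [sAX A0 XA0 ->]]; rewrite restrict_split2 !inE => /orP [] /eqP H.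
- by rewrite (single _ sAX A0 H) setDE.
- have eA := single _ (subsetDl X A) XA0 H.
  suff eAX : A = X :\ x by rewrite eA eAX setUC.
  apply/setP=> i; move/setP: eA => /(_ i); rewrite !inE.
  by case: (boolP (i \in A)) => iA; [rewrite (subsetP sAX i iA)|]; case: (i == x); case: (i \in X).
Qed.

Lemma restrict_delete_collision_unique X x F u v u' v' :
  x \in X -> split_system X F -> u \in F -> v \in F -> u' \in F -> v' \in F ->
  let r := restrict_split (X :\ x) in
  u != v -> r u = r v -> set0 \notin r u ->
  u' != v' -> r u' = r v' -> set0 \notin r u' ->
  u' = u \/ u' = v.
Proof.
move=> xX [Hs Hc] uF vF u'F v'F r nuv fuv nu nuv' fuv' nu'.
have [B [C [xB xC B0 C0 [BC BCX eu ev]]]] :=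
  restrict_delete_collision xX (Hs _ uF) (Hs _ vF) nuv fuv nu.
have [B' [C' [xB' xC' B0' C0' [BC' BCX' eu' ev']]]] :=
  restrict_delete_collision xX (Hs _ u'F) (Hs _ v'F) nuv' fuv' nu'.
have := Hc _ _ uF u'F; rewrite eu eu' => /(splits_compatible_pointed xC xC') c1.
have := Hc _ _ uF v'F; rewrite eu ev' => /(splits_compatible_pointed xC xB') c2.
have := Hc _ _ vF u'F; rewrite ev eu' => /(splits_compatible_pointed xB xC') c3.
have := Hc _ _ vF v'F; rewrite ev ev' => /(splits_compatible_pointed xB xB') c4.
have two_disjoint :
    1 < (B :&: B' == set0) + (B :&: C' == set0) + (C :&: B' == set0) + (C :&: C' == set0).
  move: c1 c2 c3 c4.
  by case: (B :&: B' == set0); case: (B :&: C' == set0);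
     case: (C :&: B' == set0); case: (C :&: C' == set0).
have [[-> ->]|[-> ->]] := bipartition_eq (etrans BCX (esym BCX')) BC BC' B0 C0 B0' C0' two_disjoint.
- by left.
- by right.
Qed.

Lemma card_restrict_delete X x F : x \in X -> split_system X F ->
  #|F| <= #|restrict_splits (X :\ x) F| + 2.
Proof.
move=> xX gF; set Y := X :\ x; set P := [set e | set0 \in restrict_split Y e].
have degenerate : #|F :&: P| <= 1.
  rewrite -(cards1 [set [set x]; Y]); apply: subset_leq_card; apply/subsetP=> e.
  by rewrite !inE => /andP [eF /(split_of_degenerate (gF.1 _ eF)) ->].
have -> : restrict_splits Y F = restrict_split Y @: (F :\: P).
  apply/setP=> e; apply/imsetP/imsetP => -[e0 H ->];
    by exists e0 => //; move: H; rewrite !inE andbC.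
have collisions : #|F :\: P| <= #|restrict_split Y @: (F :\: P)| + 1.
  apply: card_le_imset_add1 => u v u' v'; rewrite !inE.
  move=> /andP [nu uF] /andP [_ vF] /andP [nu' u'F] /andP [_ v'F] nuv fuv nuv' fuv'.
  exact: (restrict_delete_collision_unique xX gF uF vF u'F v'F nuv fuv nu nuv' fuv' nu').
by have := leq_add degenerate collisions; rewrite cardsID add1n addn1 addn2.
Qed.

Lemma card_restrict_splits Y X F : Y \subset X -> split_system X F ->
  #|F| <= #|restrict_splits Y F| + 2 * #|X :\: Y|.
Proof.
have [k] := ubnP #|X :\: Y|; elim: k => // k IH in X F *; rewrite ltnS => leXk sYX gF.
have [/eqP|[x xXY]] := set_0Vmem (X :\: Y).
  rewrite setD_eq0 => sXY; have eXY : X = Y by apply/eqP; rewrite eqEsubset sXY.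
  by subst X; rewrite setDv cards0 muln0 addn0 restrict_splits_id.
have [xY xX] : x \notin Y /\ x \in X by move: xXY; rewrite inE => /andP.
have sYXx : Y \subset X :\ x.
  by apply/subsetP=> i iY; rewrite !inE (subsetP sYX i iY) andbT; apply: contraNneq xY => <-.
have cardXY : #|X :\: Y| = #|(X :\ x) :\: Y|.+1.
  by rewrite (cardsD1 x) xXY setDDl setUC -setDDl.
have leXxk : #|(X :\ x) :\: Y| < k by rewrite -ltnS -cardXY.
have := IH _ _ leXxk sYXx (split_system_restrict (subsetDl X [set x]) gF).
have := card_restrict_delete xX gF.
by rewrite restrict_splits_comp // cardXY mulnS; lia.
Qed.

Lemma split_of_side Q e A : split_of Q e -> A \in e -> e = [set A; Q :\: A] /\ A \subset Q.
Proof.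
move=> [B [sBQ _ _ ->]]; rewrite !inE => /orP [] /eqP -> //.
by rewrite setDDid // setUC; split => //; apply: subsetDl.
Qed.

Section Quartets.
Variable Q : {set I}.
Hypothesis cardQ : #|Q| = 4.

Definition trivial_splits : {set {set {set I}}} := [set [set [set q]; Q :\ q] | q in Q].

Lemma card_pair_side A S : A \subset Q -> #|A| = 2 -> S \in [set A; Q :\: A] -> #|S| = 2.
Proof. by move=> sAQ cA; rewrite !inE => /orP [] /eqP ->; rewrite ?cardsDS // cardQ cA. Qed.

Lemma disjoint_pairs_complement S S' : S \subset Q -> S' \subset Q ->
  #|S| = 2 -> #|S'| = 2 -> S :&: S' = set0 -> S' = Q :\: S.
Proof.
move=> sSQ sS'Q cS cS' dS; apply/eqP; rewrite eqEcard cardsDS // cardQ cS cS' leqnn andbT.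
apply/subsetP=> i iS'; rewrite inE (subsetP sS'Q i iS') andbT.
by apply/negP => iS; move/setP: dS => /(_ i); rewrite !inE iS iS'.
Qed.

Lemma pair_split_unique F e e' : split_system Q F -> e \in F -> e' \in F ->
  [exists A in e, #|A| == 2] -> [exists A in e', #|A| == 2] -> e = e'.
Proof.
move=> [Hs Hc] eF e'F /exists_inP [A Ae /eqP cA] /exists_inP [A' A'e /eqP cA'].
have [ee sAQ] := split_of_side (Hs _ eF) Ae.
have [ee' sA'Q] := split_of_side (Hs _ e'F) A'e.
have /exists_inP [S Se /exists_inP [S' S'e /eqP dS]] := Hc _ _ eF e'F.
have cS : #|S| = 2 by apply: (card_pair_side sAQ cA); rewrite -ee.
have cS' : #|S'| = 2 by apply: (card_pair_side sA'Q cA'); rewrite -ee'.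
have [-> sSQ] := split_of_side (Hs _ eF) Se.
have [-> sS'Q] := split_of_side (Hs _ e'F) S'e.
by rewrite (disjoint_pairs_complement sSQ sS'Q cS cS' dS) setDDid // setUC.
Qed.

(* On four leaves there are only the four trivial splits and three pair splits,
   and any two pair splits are incompatible. *)
Lemma split_system_quartet F : split_system Q F -> 5 <= #|F| ->
  exists W, [/\ W \subset Q, #|W| = 2 & F = trivial_splits :|: [set [set W; Q :\: W]]].
Proof.
move=> gF card5; have [Hs _] := gF.
set F2 := [set e in F | [exists A in e, #|A| == 2]].
have sF2 : F2 \subset F by apply/subsetP=> e; rewrite inE => /andP [].
have not_pair_trivial : F :\: F2 \subset trivial_splits.
  apply/subsetP=> e; rewrite !inE => /andP [n2 eF].
  have [A [sAQ A0 QA0 ee]] := Hs e eF.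
  have cA2 : #|A| != 2 by apply: contra n2 => h; rewrite eF; apply/exists_inP; exists A; rewrite // ee set21.
  have cA0 : 0 < #|A| by rewrite card_gt0.
  have cA4 : #|A| < 4 by rewrite -cardQ -subn_gt0 -cardsDS // card_gt0.
  have [/eqP/cards1P [q eA]|cA3] : #|A| = 1 \/ #|A| = 3 by lia.
    have qQ : q \in Q by apply: (subsetP sAQ); rewrite eA set11.
    by apply/imsetP; exists q; rewrite // ee eA.
  have /cards1P [q eq] : #|Q :\: A| == 1 by rewrite cardsDS // cardQ cA3.
  have qQ : q \in Q by move/setP: eq => /(_ q); rewrite !inE eqxx => /andP [].
  by apply/imsetP; exists q => //; rewrite ee eq -eq setDDid // setUC.
have cF2 : #|F2| <= 1.
  case: (set_0Vmem F2) => [->|[e0 e0F2]]; first by rewrite cards0.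
  rewrite -(cards1 e0); apply: subset_leq_card; apply/subsetP => e eF2; rewrite inE; apply/eqP.
  move: eF2 e0F2; rewrite !inE => /andP [eF h] /andP [e0F h0].
  exact: (pair_split_unique gF eF e0F h h0).
have cT : #|trivial_splits| <= 4 by rewrite -cardQ; apply: leq_imset_card.
have cFF2 : #|F :\: F2| <= 4 by apply/(leq_trans _ cT)/subset_leq_card.
move: card5; rewrite -(cardsID F2 F) (setIidPr sF2) => card5.
have /cards1P [e0 eF2] : #|F2| == 1 by apply/eqP; lia.
have eT : F :\: F2 = trivial_splits by apply/eqP; rewrite eqEcard not_pair_trivial; lia.
have : e0 \in F2 by rewrite eF2 set11.
rewrite inE => /andP [e0F /exists_inP [A Ae /eqP cA]].
have [ee sAQ] := split_of_side (Hs _ e0F) Ae.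
exists A; split => //.
by rewrite -{1}(setID F F2) (setIidPr sF2) eT eF2 ee setUC.
Qed.

Lemma pair_split_sym W X : W \subset Q -> X \in [set W; Q :\: W] ->
  [set X; Q :\: X] = [set W; Q :\: W].
Proof. by move=> sWQ; rewrite !inE => /orP [] /eqP -> //; rewrite setDDid // setUC. Qed.

Lemma card_meet_pairs X Y : X \subset Q -> Y \subset Q -> #|X| = 2 -> #|Y| = 2 ->
  Y \notin [set X; Q :\: X] -> #|X :&: Y| = 1.
Proof.
move=> sXQ sYQ cX cY nY.
have : #|X :&: Y| <= 2 by rewrite -cX; apply/subset_leq_card/subsetIl.
case cXY: #|X :&: Y| => [|[|[|//]]] // _.
- move/eqP: cXY; rewrite cards_eq0 => /eqP dXY.
  by rewrite (disjoint_pairs_complement sXQ sYQ cX cY dXY) set22 in nY.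
- have eX : X :&: Y = X by apply/eqP; rewrite eqEcard subsetIl cXY cX.
  have eY : X :&: Y = Y by apply/eqP; rewrite eqEcard subsetIr cXY cY.
  by rewrite -eY eX set21 in nY.
Qed.

Lemma card_meet_sides_even W X S : W \subset Q -> #|W| = 2 ->
  X \in [set W; Q :\: W] -> S \in [set W; Q :\: W] -> ~~ odd #|X :&: S|.
Proof.
move=> sWQ cW; have cWc : #|Q :\: W| = 2 by rewrite cardsDS // cardQ cW.
have dW' : (Q :\: W) :&: W = set0 by rewrite setIC setIDv.
rewrite !inE => /orP [] /eqP -> /orP [] /eqP ->;
  by rewrite ?setIid ?cW ?cWc ?setIDv ?dW' ?cards0.
Qed.

Definition quartet_pairs : {set {set I}} := [set S : {set I} | S \subset Q & #|S| == 2].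

Lemma card_quartet_pairs : #|quartet_pairs| = 6.
Proof. by rewrite cards_draws cardQ. Qed.

Lemma split_pair_sub W : W \subset Q -> #|W| = 2 -> [set W; Q :\: W] \subset quartet_pairs.
Proof.
move=> sWQ cW; apply/subsetP => S; rewrite !inE => /orP [] /eqP ->.
- by rewrite sWQ cW.
- by rewrite subsetDl cardsDS // cardQ cW.
Qed.

Lemma card_split_pair W : W \subset Q -> #|W| = 2 -> #|[set W; Q :\: W]| = 2.
Proof.
move=> sWQ cW; rewrite cards2; suff -> : W != Q :\: W by []; apply/eqP => eW.
by move: (setIDv Q W); rewrite -{1}eW setIid => /eqP; rewrite -cards_eq0 cW.
Qed.

Lemma split_pairs_disjoint W W' : W \subset Q -> W' \subset Q ->
  [set W; Q :\: W] != [set W'; Q :\: W'] -> [set W; Q :\: W] :&: [set W'; Q :\: W'] = set0.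
Proof.
move=> sWQ sW'Q neq; apply/setP => S; rewrite inE [in RHS]inE.
apply/negbTE/negP => /andP [SW SW'].
by rewrite -(pair_split_sym sWQ SW) (pair_split_sym sW'Q SW') eqxx in neq.
Qed.

End Quartets.
End SplitSystems.

Section BinaryTrees.
Variable n : nat.
Implicit Types (Q W : {set 'I_n}) (e : {set {set 'I_n}}) (T : {set {set {set 'I_n}}}).

Lemma is_split_side e A : is_split e -> A \in e -> e = [set A; ~: A].
Proof. by move=> [B [_ _ ->]]; rewrite !inE => /orP [] /eqP -> //; rewrite setCK setUC. Qed.

Lemma binary_tree_split_system T : binary_tree T -> split_system setT T.
Proof.
move=> [Hs Hc _]; split => // e eT.
by have [A [A0 CA0 ->]] := Hs e eT; exists A; rewrite setTD.
Qed.

Lemma tree_restrict_splits T Q : binary_tree T -> tree_restrict T Q = restrict_splits Q T.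
Proof.
move=> [Hs _ _].
have eQ A : ~: A :&: Q = Q :\: A by rewrite setDE setIC.
apply/setP=> s; apply/imsetP/imsetP.
- case=> A; rewrite inE => /andP [/bigcupP [e eT Ae] /andP [h1 h2]] ->.
  have ee := is_split_side (Hs e eT) Ae.
  exists e; last by rewrite ee restrict_split2 eQ.
  by rewrite inE eT ee restrict_split2 eQ !inE negb_or eq_sym h1 eq_sym h2.
- case=> e; rewrite inE => /andP [eT h] ->.
  have [A [_ _ ee]] := Hs e eT.
  exists A; last by rewrite ee restrict_split2 eQ.
  rewrite inE; apply/andP; split; first by apply/bigcupP; exists e; rewrite // ee set21.
  by move: h; rewrite ee restrict_split2 eQ !inE negb_or eq_sym => /andP [-> ]; rewrite eq_sym.
Qed.

Lemma tree_restrict_quartet T Q : binary_tree T -> #|Q| = 4 ->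
  exists W, [/\ W \subset Q, #|W| = 2 &
    tree_restrict T Q = trivial_splits Q :|: [set [set W; Q :\: W]]].
Proof.
move=> bT cQ; have gT := binary_tree_split_system bT.
have cQc : #|[set: 'I_n] :\: Q| = n - 4 by rewrite setTD cardsCs setCK card_ord cQ.
have := card_restrict_splits (subsetT Q) gT; rewrite cQc => cT.
have n4 : 4 <= n by rewrite -cQ; apply: (leq_trans (max_card _)); rewrite card_ord.
rewrite tree_restrict_splits //; apply: (split_system_quartet cQ).
- exact: split_system_restrict (subsetT Q) gT.
- by case: bT cT => _ _ ->; lia.
Qed.

Lemma side_mem e : is_split e -> side e \in e.
Proof.
move=> [A [_ _ ee]]; rewrite /side; case: pickP => [//|H].
by move: (H A); rewrite ee set21.
Qed.

Definition induces_quartet T Q W :=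
  forall e, e \in T -> #|side e :&: Q| = 2 -> side e :&: Q \in [set W; Q :\: W].

Lemma tree_quartet_split T Q : binary_tree T -> #|Q| = 4 ->
  exists W, [/\ W \subset Q, #|W| = 2,
    tree_restrict T Q = trivial_splits Q :|: [set [set W; Q :\: W]],
    induces_quartet T Q W & exists2 e, e \in T & #|side e :&: Q| = 2].
Proof.
move=> bT cQ; have [W [sWQ cW eTQ]] := tree_restrict_quartet bT cQ.
have Hs : forall e, e \in T -> is_split e by case: bT.
have sQ A : Q :\: A = Q :\: (A :&: Q) by rewrite setDIr setDv setU0.
exists W; split => //.
- move=> e eT cA; set A := side e.
  have cQA : #|Q :\: A| = 2 by rewrite sQ cardsDS ?subsetIr // cQ cA.
  have : [set A :&: Q; Q :\: A] \in tree_restrict T Q.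
    apply/imsetP; exists A => //; rewrite inE; apply/andP; split.
      by apply/bigcupP; exists e => //; apply: side_mem; apply: Hs.
    by rewrite -!card_gt0 cA cQA.
  rewrite eTQ in_setU => /orP [/imsetP [q qQ /set2_inj [[eq _]|[eq _]]]|].
  + by move: cA; rewrite -/A eq cards1.
  + by have := cardsD1 q Q; rewrite qQ cQ -eq cA.
  + by rewrite inE => /eqP <-; rewrite set21.
- have : [set W; Q :\: W] \in tree_restrict T Q by rewrite eTQ in_setU set11 orbT.
  case/imsetP => A; rewrite inE => /andP [/bigcupP [e eT Ae] _] eW.
  exists e => //; apply: (card_pair_side cQ sWQ cW).
  have := side_mem (Hs e eT); rewrite eW (is_split_side (Hs e eT) Ae) !inE.
  by case/orP => /eqP ->; rewrite ?eqxx // setDE setIC eqxx orbT.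
Qed.

End BinaryTrees.

Local Open Scope ring_scope.

Lemma natr_Z2 (k : nat) : (k%:R : 'Z_2) = (odd k)%:R.
Proof.
elim: k => [//|k IH]; rewrite mulrS IH /=.
by case: (odd k) => /=; [apply/val_inj | rewrite addr0].
Qed.

Section QuartetCoordinates.
Variable n : nat.
Implicit Types (Q W S A : {set 'I_n}) (e : {set {set 'I_n}}) (T : {set {set {set 'I_n}}}).

Definition quartet_labelling Q S : labelling n :=
  [ffun i => if i \in Q then (if i \in S then gT else gG) else gA].

Lemma sum_quartet_labelling Q S A :
  \sum_(i in A) quartet_labelling Q S i = (#|A :&: Q|%:R, #|A :&: Q :&: S|%:R).
Proof.
have sum_indicator (B C : {set 'I_n}) : \sum_(i in B) (if i \in C then 1 else 0 : 'Z_2) = #|B :&: C|%:R.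
  by rewrite -big_mkcondr -sumr_const; apply: eq_bigl => i; rewrite inE.
rewrite [LHS]surjective_pairing (big_morph fst (id1 := 0) (op1 := +%R)) //.
rewrite (big_morph snd (id1 := 0) (op1 := +%R)) // -setIA -!sum_indicator.
by congr pair; apply: eq_bigr => i _; rewrite ffunE ?inE; case: (i \in Q); case: (i \in S).
Qed.

Definition pair_or_empty Q S := (S \subset Q) && ((S == set0) || (#|S| == 2%N)).

Definition edge_weight (a : params n) Q e (b : bool) : CC :=
  if odd #|side e :&: Q| then a e gG
  else if b || (#|side e :&: Q| != 2%N) then a e gA else a e gC.

Lemma param_quartet_labelling (a : params n) T Q W S e :
  a e gG = a e gT -> #|Q| = 4%N -> W \subset Q -> #|W| = 2%N -> pair_or_empty Q S ->
  induces_quartet T Q W -> e \in T ->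
  a e (split_elt e (quartet_labelling Q S)) =
    edge_weight a Q e ((S == set0) || (S \in [set W; Q :\: W])).
Proof.
move=> aGT cQ sWQ cW /andP [sSQ pS] indW eT.
rewrite /split_elt sum_quartet_labelling !(natr_Z2 #|_|) /edge_weight.
set X := side e :&: Q; have sXQ : X \subset Q by apply: subsetIr.
have [oX|eX] /= := boolP (odd #|X|); first by case: (odd _); rewrite ?aGT.
have [cX2|cX2] := eqVneq #|X| 2%N; last first.
  rewrite orbT; have : (#|X| <= 4)%N by rewrite -cQ subset_leq_card.
  case cX: #|X| eX cX2 => [|[|[|[|[|//]]]]] // _ _ _.
  - by move/eqP: cX; rewrite cards_eq0 => /eqP ->; rewrite set0I cards0.
  - have -> : X = Q by apply/eqP; rewrite eqEcard sXQ cQ cX.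
    by rewrite (setIidPr sSQ); case/orP: pS => /eqP ->; rewrite ?cards0.
have XW := indW e eT cX2.
have [-> /=|nS0 /=] := eqVneq S set0; first by rewrite setI0 cards0.
have [SW|nSW] := boolP (S \in [set W; Q :\: W]).
  by rewrite (negbTE (card_meet_sides_even cQ sWQ cW XW SW)).
have cS : #|S| = 2%N by move: pS; rewrite (negbTE nS0) => /eqP.
by rewrite (card_meet_pairs cQ sXQ sSQ cX2 cS) ?(pair_split_sym sWQ XW).
Qed.

Lemma fourier_param_quartet_labelling (a : params n) T Q W S :
  (forall e, a e gG = a e gT) -> #|Q| = 4%N -> W \subset Q -> #|W| = 2%N ->
  pair_or_empty Q S -> induces_quartet T Q W ->
  fourier_param T a (quartet_labelling Q S) =
    \prod_(e in T) edge_weight a Q e ((S == set0) || (S \in [set W; Q :\: W])).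
Proof.
move=> aGT cQ sWQ cW pS indW.
have total : \sum_i quartet_labelling Q S i = 0.
  case/andP: pS => sSQ pS; rewrite -big_set /= sum_quartet_labelling setTI (setIidPr sSQ).
  by rewrite !(natr_Z2 #|_|) cQ; case/orP: pS => /eqP ->; rewrite ?cards0.
rewrite /fourier_param total eqxx; apply: eq_bigr => e eT.
exact: param_quartet_labelling (aGT e) cQ sWQ cW pS indW eT.
Qed.

Definition pair_sign (s : {set {set 'I_n}}) S : CC := if S \in s then 1 else -1.

Definition quartet_form Q s (v : vec n) : CC :=
  \sum_(S in quartet_pairs Q)
    pair_sign s S * (Defs.coord v (quartet_labelling Q S) - Defs.coord v (quartet_labelling Q set0)).

Definition quartet_poly Q s : {mpoly CC[ncoord n]} :=
  \sum_(S in quartet_pairs Q) pair_sign s S *: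
    ('X_(enum_rank (quartet_labelling Q S)) - 'X_(enum_rank (quartet_labelling Q set0))).

Lemma quartet_poly_eval Q s v : (quartet_poly Q s).@[v] = quartet_form Q s v.
Proof.
rewrite /quartet_poly (big_morph (meval v) (mevalD v) (meval0 v)).
by apply: eq_bigr => S _; rewrite mevalZ mevalB !mevalXU.
Qed.

Lemma quartet_poly_homog Q s : quartet_poly Q s \is 1.-homog.
Proof.
apply: rpred_sum => S _; apply/rpredZ/rpredB; rewrite dhomogX; apply/eqP; exact: mdeg1.
Qed.

Lemma quartet_form_lin Q s (z x y : vec n) (alpha beta : CC) :
  (forall i, z i = alpha * x i + beta * y i) ->
  quartet_form Q s z = alpha * quartet_form Q s x + beta * quartet_form Q s y.
Proof.
move=> ez; rewrite /quartet_form !mulr_sumr -big_split; apply: eq_bigr => S _.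
by rewrite /Defs.coord !ez /=; ring.
Qed.

Lemma sum_pair_sign (A s : {set {set 'I_n}}) :
  \sum_(S in A) pair_sign s S = #|A :&: s|%:R - #|A :\: s|%:R.
Proof.
rewrite (big_setID s) /= (eq_bigr (fun _ => 1)); last first.
  by move=> S; rewrite inE /pair_sign => /andP [_ ->].
rewrite [X in _ + X](eq_bigr (fun _ => -1)); last first.
  by move=> S; rewrite inE /pair_sign => /andP [/negbTE -> _].
by rewrite !sumr_const mulNrn.
Qed.

Section TreeCoordinates.
Variables (T : {set {set {set 'I_n}}}) (a : params n) (Q W : {set 'I_n}) (v : vec n).
Hypotheses (aGT : forall e, a e gG = a e gT) (cQ : #|Q| = 4%N).
Hypotheses (sWQ : W \subset Q) (cW : #|W| = 2%N) (indW : induces_quartet T Q W).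
Hypothesis param_v : forall g, Defs.coord v g = fourier_param T a g.

Let alpha := \prod_(e in T) edge_weight a Q e true.
Let beta := \prod_(e in T) edge_weight a Q e false.

Lemma coord_quartet_labelling S : pair_or_empty Q S ->
  Defs.coord v (quartet_labelling Q S) =
    if (S == set0) || (S \in [set W; Q :\: W]) then alpha else beta.
Proof.
by move=> pS; rewrite param_v (fourier_param_quartet_labelling aGT cQ sWQ cW pS indW); case: ifP.
Qed.

Lemma quartet_form_tree W3 : W3 \subset Q -> #|W3| = 2%N ->
  quartet_form Q [set W3; Q :\: W3] v =
    (if [set W; Q :\: W] == [set W3; Q :\: W3] then 4%:R else 0) * (alpha - beta).
Proof.
move=> sW3Q cW3; set s := [set W; Q :\: W]; set s3 := [set W3; Q :\: W3].
have -> : quartet_form Q s3 v = (beta - alpha) * \sum_(S in quartet_pairs Q :\: s) pair_sign s3 S.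
  have p0 : pair_or_empty Q set0 by rewrite /pair_or_empty sub0set eqxx.
  rewrite mulr_sumr /quartet_form (big_setID s) /= big1 ?add0r => [|S]; last first.
    rewrite in_setI => /andP [+ SW]; rewrite inE => /andP [sSQ cS].
    rewrite !coord_quartet_labelling // ?eqxx /=; last by rewrite /pair_or_empty sSQ cS orbT.
    by case: ifP => [_|/norP [_ /negP []]] //; rewrite subrr mulr0.
  apply: eq_bigr => S; rewrite in_setD => /andP [nSW]; rewrite inE => /andP [sSQ cS].
  rewrite !coord_quartet_labelling // ?eqxx /=; last by rewrite /pair_or_empty sSQ cS orbT.
  case: ifP => [/orP [/eqP S0|SW] | _]; last by rewrite mulrC.
  - by move: cS; rewrite S0 cards0.
  - by case/negP: nSW.
rewrite sum_pair_sign.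
have cP : #|quartet_pairs Q :\: s| = 4%N.
  by rewrite cardsD (setIidPr (split_pair_sub cQ sWQ cW)) card_quartet_pairs // card_split_pair.
have [es3|nes3] := eqVneq s s3.
  by rewrite -es3 setIC setIDv cards0 setDDl setUid cP; ring.
have ds3 := split_pairs_disjoint sWQ sW3Q nes3.
have e1 : (quartet_pairs Q :\: s) :&: s3 = s3.
  apply/setIidPr/subsetP => S S3; rewrite inE (subsetP (split_pair_sub cQ sW3Q cW3) _ S3) andbT.
  by apply: contraT => /negbNE Ss; move/setP: ds3 => /(_ S); rewrite inE Ss S3 inE.
have e2 : #|(quartet_pairs Q :\: s) :\: s3| = 2%N.
  move: (cardsID s3 (quartet_pairs Q :\: s)); rewrite e1 card_split_pair // cP => h.
  by apply/eqP; rewrite -(eqn_add2l 2) h.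
rewrite e1 e2 card_split_pair //; ring.
Qed.

End TreeCoordinates.
End QuartetCoordinates.

Section ModelVarieties.
Variable n : nat.
Implicit Types (Q W : {set 'I_n}) (s : {set {set 'I_n}}) (T : {set {set {set 'I_n}}}).

Lemma model_constraint_GT m (a : params n) : model_constraint m a -> forall e, a e gG = a e gT.
Proof. by case: m => /= h e; [case: (h e) | apply: h]. Qed.

Lemma quartet_form_closure (V : vec n -> Prop) Q s z :
  (forall x, V x -> quartet_form Q s x = 0) -> zariski_closure V z -> quartet_form Q s z = 0.
Proof.
move=> LV [_ Vz]; rewrite -quartet_poly_eval.
by apply: (Vz _ _ (quartet_poly_homog Q s)) => x Vx; rewrite quartet_poly_eval LV.
Qed.

Lemma quartet_form_join (V V' : vec n -> Prop) Q s z :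
  (forall x, V x -> quartet_form Q s x = 0) -> (forall y, V' y -> quartet_form Q s y = 0) ->
  join V V' z -> quartet_form Q s z = 0.
Proof.
move=> LV LV'; apply: quartet_form_closure => w [_ [x [y [alpha [beta [Vx V'y ez]]]]]].
by rewrite (quartet_form_lin Q s ez) LV // LV' // !mulr0 addr0.
Qed.

Lemma quartet_form_model_variety m T Q W W3 z :
  #|Q| = 4%N -> W \subset Q -> #|W| = 2%N -> W3 \subset Q -> #|W3| = 2%N ->
  induces_quartet T Q W -> [set W; Q :\: W] != [set W3; Q :\: W3] ->
  model_variety m T z -> quartet_form Q [set W3; Q :\: W3] z = 0.
Proof.
move=> cQ sWQ cW sW3Q cW3 indW neW; apply: quartet_form_closure => x [_ [a [aC ex]]].
by rewrite (quartet_form_tree (model_constraint_GT aC) cQ sWQ cW indW ex) // (negbTE neW) mul0r.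
Qed.

Lemma model_variety_quartet_form_neq0 m T Q W e0 :
  #|Q| = 4%N -> W \subset Q -> #|W| = 2%N -> induces_quartet T Q W ->
  e0 \in T -> #|side e0 :&: Q| = 2%N ->
  exists z, model_variety m T z /\ quartet_form Q [set W; Q :\: W] z != 0.
Proof.
move=> cQ sWQ cW indW e0T ce0.
pose a : params n := fun e h => if (e == e0) && (h == 0) then 2 else 1.
have aC : model_constraint m a by case: m => //= e; rewrite /a.
have aGT := model_constraint_GT aC.
have prod_weight b : \prod_(e in T) edge_weight a Q e b = if b then 2 else 1.
  rewrite (bigD1 e0) //= big1 => [|e /andP [_ /negbTE ne]]; last first.
    by rewrite /edge_weight /a ne; case: ifP => //; case: ifP.
  by rewrite /edge_weight ce0 /= /a eqxx mulr1; case: b.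
pose z : vec n := fun i => fourier_param T a (enum_val i).
have ez g : Defs.coord z g = fourier_param T a g by rewrite /Defs.coord /z enum_rankK.
have p0 : pair_or_empty Q set0 by rewrite /pair_or_empty sub0set eqxx.
have Iz : model_image m T z.
  split; last by exists a.
  exists (enum_rank (quartet_labelling Q set0)); rewrite -/(Defs.coord z _) ez.
  by rewrite (fourier_param_quartet_labelling aGT cQ sWQ cW p0 indW) eqxx prod_weight pnatr_eq0.
exists z; split; first by split; [case: Iz | move=> d p _ /(_ z Iz)].
rewrite (quartet_form_tree aGT cQ sWQ cW indW ez) // eqxx !prod_weight.
have -> : (2 : CC) - 1 = 1 by ring.
by rewrite mulr1 pnatr_eq0.
Qed.

End ModelVarieties.

Theorem proposition5 (m : model) (n : nat) (T1 T2 T3 : {set {set {set 'I_n}}}) :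
  binary_tree T1 -> binary_tree T2 -> binary_tree T3 ->
  (exists Q : {set 'I_n}, [/\ #|Q| = 4%N,
       tree_restrict T3 Q != tree_restrict T1 Q & tree_restrict T3 Q != tree_restrict T2 Q]) ->
  ~ (forall z, model_variety m T3 z -> join (model_variety m T1) (model_variety m T2) z).
Proof.
move=> b1 b2 b3 [Q [cQ ne1 ne2]] V3_sub_join.
have [W1 [sW1Q cW1 eT1 ind1 _]] := tree_quartet_split b1 cQ.
have [W2 [sW2Q cW2 eT2 ind2 _]] := tree_quartet_split b2 cQ.
have [W3 [sW3Q cW3 eT3 ind3 [e0 e0T ce0]]] := tree_quartet_split b3 cQ.
have neW1 : [set W1; Q :\: W1] != [set W3; Q :\: W3].
  by apply: contra ne1 => /eqP eW; rewrite eT3 eT1 eW.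
have neW2 : [set W2; Q :\: W2] != [set W3; Q :\: W3].
  by apply: contra ne2 => /eqP eW; rewrite eT3 eT2 eW.
have [z [V3z Lz]] := model_variety_quartet_form_neq0 m cQ sW3Q cW3 ind3 e0T ce0.
suff Lz0 : quartet_form Q [set W3; Q :\: W3] z = 0 by rewrite Lz0 eqxx in Lz.
apply: quartet_form_join (V3_sub_join z V3z) => x.
- exact: quartet_form_model_variety cQ sW1Q cW1 sW3Q cW3 ind1 neW1.
- exact: quartet_form_model_variety cQ sW2Q cW2 sW3Q cW3 ind2 neW2.
Qed.
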